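(* For every maximum-weight perfect matching $M^*$ of $G$, the induced allocation $X$ is EF1.
   Context: Setting: $n$ agents, $m$ real items $\mathcal M$, restricted additive valuations: there are values $v(g)>0$ with $v_{i,g}\in\{0,v(g)\}$ and $v_i(S)=\sum_{g\in S}v_{i,g}$; every real item is valued positively by at least one agent. Let $u_1>u_2>\dots>u_t$ be the distinct values in $\{v(g):g\in\mathcal M\}$ and $\mathcal M_f=\{g:v(g)=u_f\}$. Add a set $\mathcal M_d$ of $mn-m$ dummy items valued $0$ by all agents. The bipartite graph $G$ has left side $A=\{a_g: g\in\mathcal M\cup\mathcal M_d\}$ ($mn$ vertices) and right side $B=\{b_{(i,c)}: i\in[n], c\in[m]\}$; the set $\mathcal N_c=\{b_{(i,c)}:i\in[n]\}$ is called bucket $c$. Edges: for each real $g\in\mathcal M_f$, each agent $i$ with $v_{i,g}>0$ and each $c\in[m]$, an edge $(a_g,b_{(i,c)})$ of weight $-m^{t-f}\cdot c$; for each dummy $g$ and all $i,c$, an edge $(a_g,b_{(i,c)})$ of weight $0$; no other edges. The allocation induced by a perfect matching $M$ is $X_i=\{g\in\mathcal M: a_g \text{ matched in } M \text{ to some } b_{(i,c)}\}$. $X$ is EF1 if for all agents $i,j$ either $v_i(X_i)\ge v_i(X_j)$ or there is $g\in X_j$ with $v_i(X_i)\ge v_i(X_j\setminus\{g\})$. *)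

From mathcomp Require Import all_boot all_order all_algebra.
Set Implicit Arguments. Unset Strict Implicit. Unset Printing Implicit Defensive.
Import Order.TTheory GRing.Theory Num.Theory.
Local Open Scope ring_scope.

Section Defs.
Variables (R : realFieldType) (n m : nat).
Variables (v : 'I_m -> R) (val : 'I_n -> 'I_m -> R).

(* Left side A: real items (inl g) and the m*n - m dummy items (inr d). *)
Definition Left := ('I_m + 'I_(m * n - m))%type.
(* Right side B: vertices b_(i,c); c : 'I_m encodes bucket c+1 in [m]. *)
Definition Right := ('I_n * 'I_m)%type.

Definition dist_values : seq R :=
  sort (fun x y => y <= x) (undup [seq v g | g <- enum 'I_m]).
Definition tval : nat := size dist_values.
(* f such that v(g) = u_f (1-based) *)
Definition fidx (g : 'I_m) : nat := (index (v g) dist_values).+1.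

Definition is_edge (a : Left) (b : Right) : bool :=
  match a with
  | inl g => 0 < val b.1 g
  | inr _ => true
  end.

Definition edge_weight (a : Left) (b : Right) : int :=
  match a with
  | inl g => - ((m ^ (tval - fidx g))%:Z * (b.2 : nat).+1%:Z)
  | inr _ => 0
  end.

Definition perfect_matching (M : Left -> Right) : Prop :=
  bijective M /\ forall a, is_edge a (M a).

Definition matching_weight (M : Left -> Right) : int :=
  \sum_(a : Left) edge_weight a (M a).

Definition max_weight_perfect_matching (M : Left -> Right) : Prop :=
  perfect_matching M /\
  forall M' : Left -> Right, perfect_matching M' ->
    matching_weight M' <= matching_weight M.

Definition induced_alloc (M : Left -> Right) (i : 'I_n) : {set 'I_m} :=
  [set g | (M (inl g)).1 == i].

Definition bundle_value (i : 'I_n) (S : {set 'I_m}) : R :=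
  \sum_(g in S) val i g.

Definition EF1 (X : 'I_n -> {set 'I_m}) : Prop :=
  forall i j : 'I_n,
    bundle_value i (X j) <= bundle_value i (X i) \/
    exists2 g, g \in X j & bundle_value i (X j :\ g) <= bundle_value i (X i).
End Defs.

(* Buckets are indexed from 0, so slot (j, c) is agent j's (c+1)-th pick and
   an item g placed there contributes -prio(g) * (c+1) to the weight, where
   prio(g) = m^(t - f(g)) grows by a factor m between consecutive distinct
   values (prio_gap).  Two exchange arguments on a maximum-weight perfect
   matching M show: if agent i != j values g and g sits in a bucket c > 0 of
   agent j, then slot (i, c - 1) holds a real item h with v_i(h) >= v_i(g).
   A dummy there could be swapped with g (prev_slot_not_dummy); a worse item h
   could be rotated out through a dummy slot of i, which exists by pigeonhole
   (dummy_at_agent), gaining at least prio(g) - (m - 1) prio(h) > 0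
   (prev_slot_item_better).  Sending each such g to that h is injective, so
   the items of X_j outside bucket 0 are worth at most v_i(X_i) to i
   (bundle_le_of_late_items, via the summation lemma sum_le_inj).  X_j has at
   most one item in bucket 0; removing it gives EF1 (mainTheorem10). *)
From Pilot Require Import Defs.
From mathcomp Require Import all_boot all_order all_algebra.
From mathcomp Require Import perm zify.
Set Implicit Arguments. Unset Strict Implicit. Unset Printing Implicit Defensive.
Import Order.TTheory GRing.Theory Num.Theory.
Local Open Scope ring_scope.

Lemma sum_tperm (T : finType) (U : Type) (f : T -> U -> int) (F : T -> U) x y :
  x != y ->
  \sum_a f a (F (tperm x y a)) =
  \sum_a f a (F a) + (f x (F y) + f y (F x) - f x (F x) - f y (F y)).
Proof.
move=> xy.
rewrite (bigD1 x) // (bigD1 y) 1?eq_sym //= [in RHS](bigD1 x) //.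
rewrite [in RHS](bigD1 y) 1?eq_sym //= tpermL tpermR.
rewrite (eq_bigr (fun a => f a (F a))); last first.
  by move=> a /andP[ay ax]; rewrite tpermD // eq_sym.
lia.
Qed.

Lemma sum_le_inj (T : finType) (R : numDomainType) (f : T -> R) (phi : T -> T)
    (A B : {set T}) :
  (forall x, 0 <= f x) -> {in A, forall x, f x <= f (phi x)} ->
  {in A &, injective phi} -> phi @: A \subset B ->
  \sum_(x in A) f x <= \sum_(x in B) f x.
Proof.
move=> f_ge0 f_phi phi_inj phiAB.
apply: (le_trans (y := \sum_(x in A) f (phi x))); first exact: ler_sum.
rewrite -big_imset // [in X in _ <= X](big_setID (phi @: A)) /=.
by rewrite (setIidPr phiAB) lerDl sumr_ge0.
Qed.

(* The priority of an item: an edge of item g into bucket index c weighs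
   -(prio g * (c + 1)); more valuable items get larger priorities. *)
Definition prio (R : realFieldType) (m : nat) (v : 'I_m -> R) (g : 'I_m) : nat :=
  m ^ (Defs.tval v - fidx v g).

Lemma mem_dist_values (R : realFieldType) m (v : 'I_m -> R) g :
  v g \in dist_values v.
Proof. by rewrite mem_sort mem_undup map_f // mem_enum. Qed.

Lemma fidx_le_tval (R : realFieldType) m (v : 'I_m -> R) g :
  (fidx v g <= Defs.tval v)%N.
Proof. by rewrite /fidx /Defs.tval index_mem mem_dist_values. Qed.

(* Distinct values are listed in decreasing order, so a larger value has a
   smaller rank. *)
Lemma fidx_lt (R : realFieldType) m (v : 'I_m -> R) g h :
  v h < v g -> (fidx v g < fidx v h)%N.
Proof.
move=> vhg; rewrite /fidx ltnS.
have ge_trans : transitive (fun x y : R => y <= x).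
  by move=> a b c ab bc; exact: le_trans bc ab.
have sorted_dist : sorted (fun x y : R => y <= x) (dist_values v).
  by apply: sort_sorted => a b; exact: le_total.
case: ltngtP => // idx.
  have := sorted_ltn_index ge_trans sorted_dist _ _
            (mem_dist_values v h) (mem_dist_values v g) idx.
  by rewrite /= leNgt vhg.
have := congr1 (nth 0 (dist_values v)) idx.
by rewrite !nth_index ?mem_dist_values // => vgh; rewrite vgh ltxx in vhg.
Qed.

(* Priorities are positive (m > 0 as soon as there is an item). *)
Lemma prio_gt0 (R : realFieldType) m (v : 'I_m -> R) g : (0 < prio v g)%N.
Proof. by rewrite expn_gt0 (leq_ltn_trans (leq0n g) (ltn_ord g)). Qed.

(* The priority of a strictly more valuable item exceeds m times that of a
   less valuable one: one bucket of the better item outweighs all buckets. *)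
Lemma prio_gap (R : realFieldType) m (v : 'I_m -> R) g h :
  v h < v g -> (prio v h * m <= prio v g)%N.
Proof.
move=> vhg; rewrite /prio -expnSr leq_pexp2l //.
  by rewrite (leq_ltn_trans (leq0n g) (ltn_ord g)).
have := fidx_lt vhg; have := fidx_le_tval v h; lia.
Qed.

Lemma matching_weight_tperm (R : realFieldType) (n m : nat) (v : 'I_m -> R)
    (F : Left n m -> Right n m) x y :
  x != y ->
  matching_weight v (F \o tperm x y) = matching_weight v F +
    (edge_weight v x (F y) + edge_weight v y (F x)
     - edge_weight v x (F x) - edge_weight v y (F y)).
Proof. exact: sum_tperm. Qed.

Lemma perfect_matching_comp (R : realFieldType) (n m : nat)
    (val : 'I_n -> 'I_m -> R) (F : Left n m -> Right n m) (s : Left n m -> Left n m) :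
  perfect_matching val F -> bijective s -> (forall a, is_edge val a (F (s a))) ->
  perfect_matching val (F \o s).
Proof.
by move=> [F_bij _] s_bij edges; split; [exact: (bij_comp F_bij s_bij) | exact: edges].
Qed.

Definition prev_bucket (m : nat) (c : 'I_m) : 'I_m :=
  Ordinal (leq_ltn_trans (leq_pred c) (ltn_ord c)).

Lemma prev_bucket_inj (m : nat) (c1 c2 : 'I_m) :
  (0 < c1)%N -> (0 < c2)%N -> prev_bucket c1 = prev_bucket c2 -> c1 = c2.
Proof. by move=> c1_gt0 c2_gt0 [eq_pred]; apply: val_inj => /=; lia. Qed.

Section MaxWeightMatching.

Variables (R : realFieldType) (n m : nat).
Variables (v : 'I_m -> R) (val : 'I_n -> 'I_m -> R).
Hypothesis v_gt0 : forall g, 0 < v g.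
Hypothesis val_restricted : forall i g, val i g = 0 \/ val i g = v g.
Variable M : Left n m -> Right n m.
Hypothesis M_perfect : perfect_matching val M.
Hypothesis M_max : forall M' : Left n m -> Right n m,
  perfect_matching val M' -> matching_weight v M' <= matching_weight v M.

Let M_bij : bijective M := M_perfect.1.

Lemma val_ge0 i g : 0 <= val i g.
Proof. by case: (val_restricted i g) => ->; rewrite ?lexx ?ltW. Qed.

Lemma val_gt0E i g : 0 < val i g -> val i g = v g.
Proof. by case: (val_restricted i g) => -> //; rewrite ltxx. Qed.

Lemma same_slot g1 g2 :
  (M (inl g1)).1 = (M (inl g2)).1 -> (M (inl g1)).2 = (M (inl g2)).2 -> g1 = g2.
Proof.
move=> agent bucket.
have : M (inl g1) = M (inl g2).
  by rewrite [M (inl g1)]surjective_pairing agent bucket -surjective_pairing.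
by move/(bij_inj M_bij) => [].
Qed.

(* Pigeonhole: an agent that does not hold the real item g has only m - 1 real
   items available for its m slots, so one of its slots holds a dummy. *)
Lemma dummy_at_agent i g :
  (M (inl g)).1 != i -> exists d, (M (inr d)).1 = i.
Proof.
move=> g_elsewhere; have [Minv _ KM] := M_bij.
case: (pickP (fun d => (M (inr d)).1 == i)) => [d /eqP <-|no_dummy].
  by exists d.
pose owner (c : 'I_m) := if Minv (i, c) is inl h then h else g.
have ownerE c : M (inl (owner c)) = (i, c).
  rewrite /owner; case E: (Minv (i, c)) => [h|d]; first by rewrite -E KM.
  by move: (no_dummy d); rewrite -E KM /= eqxx.
have owner_inj : injective owner.
  by move=> c1 c2 eq_owner; have := ownerE c2; rewrite -eq_owner ownerE => -[].
have [owner_inv _ ownerK] := injF_bij owner_inj.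
by move: g_elsewhere; rewrite -(ownerK g) ownerE eqxx.
Qed.

(* Exchange 1: if agent i values g (sitting in a nonzero bucket c), the slot
   (i, c - 1) cannot hold a dummy, since swapping g with that dummy would
   raise the weight by prio g. *)
Lemma prev_slot_not_dummy g i d :
  0 < val i g -> (0 < (M (inl g)).2)%N ->
  M (inr d) <> (i, prev_bucket (M (inl g)).2).
Proof.
move=> vig bucket_gt0 Md.
pose M' := M \o tperm (inl g) (inr d).
have M'_perfect : perfect_matching val M'.
  apply: perfect_matching_comp => //; first exact: inv_bij (tpermK _ _).
  by move=> a; case: tpermP => [->|->|_ _] //; [rewrite Md | exact: M_perfect.2].
have := M_max M'_perfect.
rewrite matching_weight_tperm // Md /= prednK // -/(prio v g).
have := prio_gt0 v g; lia.
Qed.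

(* Exchange 2: if instead (i, c - 1) holds a real item h that i values less
   than g, then moving g there, h to a dummy slot of i and that dummy to g's
   slot gains at least prio g - (m - 1) * prio h > 0, by the priority gap. *)
Lemma prev_slot_item_better g h i :
  (M (inl g)).1 != i -> 0 < val i g -> (0 < (M (inl g)).2)%N ->
  M (inl h) = (i, prev_bucket (M (inl g)).2) -> val i g <= val i h.
Proof.
move=> g_elsewhere vig bucket_gt0 Mh.
have vih : 0 < val i h by have := M_perfect.2 (inl h); rewrite Mh.
rewrite leNgt (val_gt0E vih) (val_gt0E vig); apply/negP => vhg.
have [d Md] := dummy_at_agent g_elsewhere.
have gh : inl g != inl h :> Left n m.
  by apply/eqP => -[hg]; move: g_elsewhere; rewrite hg Mh eqxx.
pose M' := (M \o tperm (inl g) (inl h)) \o tperm (inl h) (inr d).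
have M'_perfect : perfect_matching val M'.
  apply: (perfect_matching_comp
            (s := tperm (inl g) (inl h) \o tperm (inl h) (inr d))).
  - exact: M_perfect.
  - by apply: bij_comp; exact: inv_bij (tpermK _ _).
  move=> a /=; case: (tpermP (inl h) (inr d) a) => [->|->|ah ad].
  - by rewrite tpermD //= Md.
  - by rewrite tpermR.
  - case: (tpermP (inl g) (inl h) a) => [->|ah'|_ _]; last exact: M_perfect.2.
    + by rewrite Mh.
    + by case: (ah ah').
have := M_max M'_perfect.
rewrite /M' matching_weight_tperm // matching_weight_tperm //.
rewrite /= tpermD // tpermR Mh /= prednK // -/(prio v g) -/(prio v h).
have := prio_gap vhg; have := prio_gt0 v h; have := ltn_ord (M (inr d)).2.
move: bucket_gt0 (prio v h) (prio v g) ((M (inr d)).2 : nat).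
move: ((M (inl g)).2 : nat) (matching_weight v M) => cg W + Ph Pg cd *; nia.
Qed.

Lemma prev_slot_dominates g i :
  (M (inl g)).1 != i -> 0 < val i g -> (0 < (M (inl g)).2)%N ->
  exists2 h, M (inl h) = (i, prev_bucket (M (inl g)).2) & val i g <= val i h.
Proof.
move=> g_elsewhere vig bucket_gt0; have [Minv _ KM] := M_bij.
case E: (Minv (i, prev_bucket (M (inl g)).2)) => [h|d].
  have Mh : M (inl h) = (i, prev_bucket (M (inl g)).2) by rewrite -E KM.
  by exists h => //; exact: prev_slot_item_better Mh.
have Md : M (inr d) = (i, prev_bucket (M (inl g)).2) by rewrite -E KM.
by case: (prev_slot_not_dummy vig bucket_gt0 Md).
Qed.

(* Items of another agent's bundle that sit in nonzero buckets are worth no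
   more to i than i's own bundle: map each valued item to the item in the
   preceding slot of i, which is injective and value-increasing. *)
Lemma bundle_le_of_late_items i j (S : {set 'I_m}) :
  i != j -> S \subset induced_alloc M j ->
  {in S, forall g, (0 < (M (inl g)).2)%N} ->
  bundle_value val i S <= bundle_value val i (induced_alloc M i).
Proof.
move=> ij S_j S_late.
have agent_j g : g \in S -> (M (inl g)).1 = j.
  by move=> /(subsetP S_j); rewrite inE => /eqP.
pose A := [set g in S | 0 < val i g].
pose phi g := odflt g [pick h | M (inl h) == (i, prev_bucket (M (inl g)).2)].
have phiP g : g \in A ->
    M (inl (phi g)) = (i, prev_bucket (M (inl g)).2) /\ val i g <= val i (phi g).
  rewrite inE => /andP[gS vig].
  have [|h Mh le_gh] := prev_slot_dominates _ vig (S_late g gS).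
    by rewrite agent_j // eq_sym.
  rewrite /phi; case: pickP => [h' /eqP Mh'|/(_ h)]; last by rewrite Mh eqxx.
  by rewrite Mh'; have -> : h' = h by apply: same_slot; rewrite Mh Mh'.
have phi_inj : {in A &, injective phi}.
  move=> g1 g2 g1A g2A phi12.
  have [M1 _] := phiP g1 g1A; have [M2 _] := phiP g2 g2A.
  move: g1A g2A; rewrite !inE => /andP[g1S _] /andP[g2S _].
  apply: same_slot; first by rewrite !agent_j.
  apply: prev_bucket_inj; rewrite ?S_late //.
  by move: M1; rewrite phi12 M2 => /(congr1 snd) /= ->.
have phi_in_i : phi @: A \subset induced_alloc M i.
  by apply/subsetP => _ /imsetP[g gA ->]; rewrite inE (phiP g gA).1.
have -> : bundle_value val i S = \sum_(g in A) val i g.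
  rewrite /bundle_value (bigID (fun g => 0 < val i g)) /= [X in _ + X]big1.
    by rewrite addr0; apply: eq_bigl => g; rewrite inE.
  by move=> g /andP[_]; case: (val_restricted i g) => ->; rewrite ?v_gt0 ?ltxx.
apply: (sum_le_inj (val_ge0 i) _ phi_inj phi_in_i).
by move=> g gA; exact: (phiP g gA).2.
Qed.

End MaxWeightMatching.

(* EF1 for i against j: if j holds an item in the first bucket, removing it
   leaves only items in later buckets; otherwise all of X_j is late already. *)
Theorem mainTheorem10 (R : realFieldType) (n m : nat)
    (v : 'I_m -> R) (val : 'I_n -> 'I_m -> R) :
  (forall g, 0 < v g) ->
  (forall i g, val i g = 0 \/ val i g = v g) ->
  (forall g, exists i, 0 < val i g) ->
  forall M : Left n m -> Right n m,
    max_weight_perfect_matching v val M ->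
    EF1 val (induced_alloc M).
Proof.
move=> v_gt0 val_restricted _ M [M_perfect M_max] i j.
have [<-|ij] := eqVneq i j; first by left.
have late := bundle_le_of_late_items v_gt0 val_restricted M_perfect M_max ij.
pose first g := (g \in induced_alloc M j) && ((M (inl g)).2 == 0 :> nat).
case: (pickP first).
  move=> g0 /andP[g0_j /eqP g0_first]; right; exists g0 => //.
  apply: late; first exact: subD1set.
  move=> g; rewrite !inE => /andP[g_g0 g_j]; rewrite lt0n.
  apply: contra g_g0 => /eqP g_first; apply/eqP.
  apply: (same_slot M_perfect).
    by move: g0_j; rewrite (eqP g_j) inE => /eqP.
  by apply: val_inj; rewrite /= g_first g0_first.
move=> no_first; left; apply: late => // g g_j; rewrite lt0n.
by apply/negP => g_first; move: (no_first g); rewrite /first g_j g_first.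
Qed.
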